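(* For every $\theta\in\Theta$ and every mass vector $W=[w_1,\dots,w_n]$ (i.e. $w_i\ge 0$, $\sum_{i=1}^n w_i=1$), with induced distribution $\tilde{\mathbb P}_n=\sum_{i=1}^n w_i\delta_{\xi_i}$, every minimizer $\tilde\lambda_*(\theta)$ of $\lambda\mapsto \lambda\sigma^p+\tilde H(\theta,\lambda)$ over $\lambda\ge 0$ satisfies $$\tilde\lambda_*(\theta)\le \tau(\theta):=\mathtt C(\theta)\left(2^{p-1}+\frac{1+2^{p-1}\rho^p}{\sigma^p}\right),$$ where $\rho=\max_{i\in[n]}\mathtt d(\xi_i,\xi_0)$.
   Context: Setting: $\Xi=\mathbb X\times\mathbb Y$ with $\mathbb X\subseteq\mathbb R^m$, $\mathbb Y\subseteq\mathbb R$, equipped with the metric $\mathtt d((x,y),(x',y'))=\|x-x'\|+\frac{\gamma}{2}|y-y'|$ for a norm $\|\cdot\|$ on $\mathbb R^m$ and $\gamma>0$; $(\Xi,\mathtt d)$ is assumed complete. Fix $p\ge1$, $\sigma>0$, data points $\xi_1,\dots,\xi_n\in\Xi$, $[n]=\{1,\dots,n\}$. A loss $\ell:\mathbb R^d\times\Xi\to[0,\infty)$ and a feasible set $\Theta\subseteq\mathbb R^d$ are given. Assumption: $\ell(\theta,\cdot)$ is continuous for every $\theta\in\Theta$, and there exist a positive continuous function $\mathtt C(\theta)$ and a point $\xi_0\in\Xi$ with $\ell(\theta,\xi)\le \mathtt C(\theta)(1+\mathtt d^p(\xi,\xi_0))$ for all $\theta\in\Theta,\xi\in\Xi$. Define the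 Moreau–Yosida regularization $h(\theta,\lambda,\xi)=\sup_{\zeta\in\Xi}\{\ell(\theta,\zeta)-\lambda\mathtt d^p(\zeta,\xi)\}$, $h_i(\theta,\lambda)=h(\theta,\lambda,\xi_i)$, and for a mass vector $W$, $\tilde H(\theta,\lambda)=\sum_{i=1}^n w_ih_i(\theta,\lambda)$. *)

From mathcomp Require Import all_boot all_order all_algebra.
From mathcomp Require Import all_classical all_reals all_analysis.
Import Order.TTheory GRing.Theory Num.Theory.
Import numFieldNormedType.Exports.
Local Open Scope ring_scope.
Local Open Scope classical_set_scope.

Set Implicit Arguments.
Unset Strict Implicit.
Unset Printing Implicit Defensive.

Definition is_norm (R : realType) (m : nat) (nrm : 'rV[R]_m -> R) : Prop :=
  [/\ (forall x, nrm x = 0 -> x = 0),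
      (forall (a : R) x, nrm (a *: x) = `|a| * nrm x) &
      (forall x y, nrm (x + y) <= nrm x + nrm y)].

Definition Xi (R : realType) (m : nat) (X : set 'rV[R]_m) (Y : set R)
  : set ('rV[R]_m * R) := [set u | X u.1 /\ Y u.2].

Definition dist (R : realType) (m : nat) (nrm : 'rV[R]_m -> R) (gamma : R)
  (u v : 'rV[R]_m * R) : R :=
  nrm (u.1 - v.1) + gamma / 2 * `|u.2 - v.2|.

Definition complete_in (R : realType) (T : Type) (dd : T -> T -> R) (S : set T) : Prop :=
  forall u : nat -> T, (forall k, S (u k)) ->
    (forall e : R, 0 < e -> exists N, forall k l, (N <= k)%N -> (N <= l)%N ->
        dd (u k) (u l) < e) ->
    exists z, S z /\ (forall e : R, 0 < e -> exists N, forall k, (N <= k)%N ->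
        dd (u k) z < e).

Definition continuous_on_metric (R : realType) (T : Type) (dd : T -> T -> R)
  (S : set T) (f : T -> R) : Prop :=
  forall z, S z -> forall e : R, 0 < e -> exists2 delta : R, 0 < delta &
    forall z', S z' -> dd z' z < delta -> `|f z' - f z| < e.

Definition moreau_yosida (R : realType) (Th T : Type) (ell : Th -> T -> R)
  (dd : T -> T -> R) (S : set T) (p : R) (theta : Th) (lam : R) (xi : T) : \bar R :=
  ereal_sup [set ((ell theta z - lam * (dd z xi) `^ p)%:E)%E | z in S].

Definition Htilde (R : realType) (Th T : Type) (ell : Th -> T -> R)
  (dd : T -> T -> R) (S : set T) (p : R) (n : nat) (w : 'I_n -> R)
  (xs : 'I_n -> T) (theta : Th) (lam : R) : \bar R :=
  (\sum_(i < n) (w i)%:E * moreau_yosida ell dd S p theta lam (xs i))%E.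

(* For lam0 := C(theta) 2^(p-1), convexity of t |-> t^p gives
   d(z, xi0)^p <= 2^(p-1) (d(z, xi_i)^p + d(xi_i, xi0)^p), so the growth bound on
   the loss makes every h_i(theta, lam0) at most K := C(theta) (1 + 2^(p-1) rho^p),
   hence H~(theta, lam0) <= K.  Since H~ >= 0 (take zeta = xi_i in the supremum),
   optimality of lam* against lam0 gives lam* sigma^p <= lam0 sigma^p + K. *)

From mathcomp Require Import all_boot all_order all_algebra.
From mathcomp Require Import all_classical all_reals all_analysis.
From mathcomp Require Import ring lra.
Import Order.TTheory GRing.Theory Num.Theory.
Import numFieldNormedType.Exports.
Local Open Scope ring_scope.
Local Open Scope classical_set_scope.

Set Implicit Arguments.
Unset Strict Implicit.
Unset Printing Implicit Defensive.

Lemma powR_add_le (R : realType) (p a b : R) : 1 <= p -> 0 <= a -> 0 <= b ->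
  (a + b) `^ p <= 2 `^ (p - 1) * (a `^ p + b `^ p).
Proof.
move=> p1 a0 b0; have p0 : 0 < p by apply: lt_le_trans p1.
have half_convex : (2^-1 * a + 2^-1 * b) `^ p <= 2^-1 * a `^ p + 2^-1 * b `^ p.
  rewrite {2 4}(_ : 2^-1 = 1 - 2^-1); last by rewrite {2}(splitr 1) div1r addrK.
  by apply: (convex_powR p1 (Itv01 _ _)) => //=;
    rewrite ?inE/= ?in_itv/= ?andbT // ?invr_ge0// invf_le1 ?ler1n.
have -> : a + b = 2 * (2^-1 * a + 2^-1 * b) by field.
have -> : 2 `^ (p - 1) = 2 `^ p / 2 :> R.
  by rewrite powRB ?powRr1 //; apply/implyP => _; rewrite pnatr_eq0.
rewrite powRM ?addr_ge0 ?mulr_ge0 ?invr_ge0 //.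
apply: le_trans (ler_wpM2l (powR_ge0 _ _) half_convex) _.
by rewrite le_eqVlt; apply/orP; left; apply/eqP; field.
Qed.

Lemma penalty_minimizer_le (R : realType) (F : R -> \bar R) (s lam_star lam0 K : R) :
  0 < s -> (0 <= F lam_star)%E -> (F lam0 <= K%:E)%E ->
  ((lam_star * s)%:E + F lam_star <= (lam0 * s)%:E + F lam0)%E ->
  lam_star <= lam0 + K / s.
Proof.
move=> s_gt0 F_ge0 F_le opt.
have : ((lam_star * s)%:E <= (lam0 * s)%:E + K%:E)%E.
  by apply: le_trans (leeDl _ F_ge0) _; apply: le_trans opt (leeD2l _ F_le).
rewrite -EFinD lee_fin => le_penalty.
have -> : lam0 + K / s = (lam0 * s + K) / s by field; rewrite gt_eqF.
by rewrite ler_pdivlMr.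
Qed.

Section moreau_yosida.
Variables (R : realType) (Th T : Type) (ell : Th -> T -> R).
Variables (dd : T -> T -> R) (S : set T) (p : R).
Local Notation h := (moreau_yosida ell dd S p).

Lemma moreau_yosida_ge0 theta lam xi : p != 0 -> S xi -> dd xi xi = 0 ->
  0 <= ell theta xi -> (0 <= h theta lam xi)%E.
Proof.
move=> p_neq0 Sxi dd_xixi ell_ge0; apply: le_ereal_sup_tmp.
exists (ell theta xi - lam * dd xi xi `^ p)%:E; first by exists xi.
by rewrite dd_xixi powR0 // mulr0 subr0 lee_fin.
Qed.

Lemma moreau_yosida_growth_le theta (c : R) (xi0 xi : T) : 1 <= p -> 0 <= c ->
  (forall a b, 0 <= dd a b) -> (forall a b e, dd a e <= dd a b + dd b e) ->
  (forall z, S z -> ell theta z <= c * (1 + dd z xi0 `^ p)) ->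
  (h theta (c * 2 `^ (p - 1)) xi <= (c * (1 + 2 `^ (p - 1) * dd xi xi0 `^ p))%:E)%E.
Proof.
move=> p1 c_ge0 dd_ge0 dd_tri ell_le; apply: ge_ereal_sup => _ [z Sz <-].
rewrite lee_fin; have p_ge0 : 0 <= p by apply: le_trans p1.
have split_at_xi : dd z xi0 `^ p <= 2 `^ (p - 1) * (dd z xi `^ p + dd xi xi0 `^ p).
  apply: le_trans (powR_add_le p1 (dd_ge0 _ _) (dd_ge0 _ _)).
  by apply: ge0_ler_powR; rewrite ?nnegrE ?addr_ge0.
have := ler_wpM2l c_ge0 split_at_xi; have := ell_le z Sz; nra.
Qed.

Variables (n : nat) (w : 'I_n -> R) (xs : 'I_n -> T).
Hypothesis w_ge0 : forall i, 0 <= w i.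

Lemma Htilde_ge0 theta lam : (forall i, 0 <= h theta lam (xs i))%E ->
  (0 <= Htilde ell dd S p w xs theta lam)%E.
Proof.
by move=> h_ge0; apply: sume_ge0 => i _; apply: mule_ge0; rewrite ?lee_fin.
Qed.

Lemma Htilde_le theta lam (K : R) : \sum_(i < n) w i = 1 ->
  (forall i, h theta lam (xs i) <= K%:E)%E ->
  (Htilde ell dd S p w xs theta lam <= K%:E)%E.
Proof.
move=> w_sum1 h_le; apply: (@le_trans _ _ (\sum_(i < n) (w i * K)%:E)%E).
  by apply: lee_sum => i _; rewrite EFinM lee_wpmul2l ?lee_fin.
by rewrite sumEFin -big_distrl /= w_sum1 mul1r.
Qed.

End moreau_yosida.

Section norm_dist.
Variables (R : realType) (m : nat) (nrm : 'rV[R]_m -> R) (gamma : R).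
Hypotheses (nrm_norm : is_norm nrm) (gamma_ge0 : 0 <= gamma).

Lemma is_norm0 : nrm 0 = 0.
Proof. by case: nrm_norm => _ nrmZ _; have := nrmZ 0 0; rewrite scale0r normr0 mul0r. Qed.

Lemma is_normN x : nrm (- x) = nrm x.
Proof. by case: nrm_norm => _ nrmZ _; rewrite -scaleN1r nrmZ normrN normr1 mul1r. Qed.

Lemma is_norm_ge0 x : 0 <= nrm x.
Proof.
case: nrm_norm => _ _ nrmD; have := nrmD x (- x).
rewrite subrr is_norm0 is_normN; lra.
Qed.

Lemma dist_ge0 u v : 0 <= dist nrm gamma u v.
Proof. by rewrite /dist addr_ge0 ?is_norm_ge0 // mulr_ge0 // divr_ge0. Qed.

Lemma dist_xx u : dist nrm gamma u u = 0.
Proof. by rewrite /dist !subrr is_norm0 normr0 mulr0 addr0. Qed.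

Lemma dist_triangle u v z : dist nrm gamma u z <= dist nrm gamma u v + dist nrm gamma v z.
Proof.
case: nrm_norm => _ _ nrmD; rewrite /dist.
have := nrmD (u.1 - v.1) (v.1 - z.1); rewrite addrA subrK.
have := ler_wpM2l (divr_ge0 gamma_ge0 (ler0n _ 2)) (ler_normD (u.2 - v.2) (v.2 - z.2)).
rewrite addrA subrK; lra.
Qed.

End norm_dist.

Theorem lemma1 (R : realType) (m d n : nat)
  (X : set 'rV[R]_m) (Y : set R) (nrm : 'rV[R]_m -> R) (gamma : R)
  (p sigma : R) (xs : 'I_n -> 'rV[R]_m * R)
  (ell : 'rV[R]_d -> 'rV[R]_m * R -> R) (Theta : set 'rV[R]_d)
  (C : 'rV[R]_d -> R) (xi0 : 'rV[R]_m * R) :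
  is_norm nrm -> 0 < gamma ->
  complete_in (dist nrm gamma) (Xi X Y) ->
  1 <= p -> 0 < sigma ->
  (forall i, Xi X Y (xs i)) ->
  (forall th z, Xi X Y z -> 0 <= ell th z) ->
  (forall th, Theta th -> continuous_on_metric (dist nrm gamma) (Xi X Y) (ell th)) ->
  (forall th, 0 < C th) -> continuous C ->
  Xi X Y xi0 ->
  (forall th z, Theta th -> Xi X Y z ->
     ell th z <= C th * (1 + (dist nrm gamma z xi0) `^ p)) ->
  forall (theta : 'rV[R]_d) (w : 'I_n -> R),
  Theta theta ->
  (forall i, 0 <= w i) -> \sum_(i < n) w i = 1 ->
  forall lam_star : R,
  0 <= lam_star ->
  (forall lam : R, 0 <= lam ->
     ((lam_star * sigma `^ p)%:E
        + Htilde ell (dist nrm gamma) (Xi X Y) p w xs theta lam_star <=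
      (lam * sigma `^ p)%:E
        + Htilde ell (dist nrm gamma) (Xi X Y) p w xs theta lam)%E) ->
  let rho := \big[Order.max/0]_(i < n) dist nrm gamma (xs i) xi0 in
  lam_star <= C theta * (2 `^ (p - 1) + (1 + 2 `^ (p - 1) * rho `^ p) / sigma `^ p).
Proof.
move=> nrm_norm gamma_gt0 _ p1 sigma_gt0 xsS ell_ge0 _ C_gt0 _ _ ell_le
  theta w Theta_theta w_ge0 w_sum1 lam_star _ lam_star_min /=.
set rho := \big[Num.max/0]_(i < n) _.
have gamma_ge0 := ltW gamma_gt0.
have C_ge0 := ltW (C_gt0 theta).
have p_neq0 : p != 0 by rewrite gt_eqF // (lt_le_trans ltr01 p1).
set lam0 := C theta * 2 `^ (p - 1).
set K := C theta * (1 + 2 `^ (p - 1) * rho `^ p).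
have H_ge0 : (0 <= Htilde ell (dist nrm gamma) (Xi X Y) p w xs theta lam_star)%E.
  apply: Htilde_ge0 => // i.
  apply: moreau_yosida_ge0 => //; [exact: dist_xx | exact: ell_ge0].
have H_le : (Htilde ell (dist nrm gamma) (Xi X Y) p w xs theta lam0 <= K%:E)%E.
  apply: Htilde_le => // i.
  apply: le_trans (moreau_yosida_growth_le (xs i) p1 C_ge0 (dist_ge0 nrm_norm gamma_ge0)
    (dist_triangle nrm_norm gamma_ge0) (fun z => ell_le theta z Theta_theta)) _.
  rewrite lee_fin /K ler_wpM2l // lerD2l ler_wpM2l ?powR_ge0 //.
  have dist_le_rho : dist nrm gamma (xs i) xi0 <= rho by apply: le_bigmax.
  apply: ge0_ler_powR => //; first exact: le_trans p1.
  - by rewrite nnegrE dist_ge0.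
  - by rewrite nnegrE (le_trans (dist_ge0 nrm_norm gamma_ge0 _ _) dist_le_rho).
have := penalty_minimizer_le (powR_gt0 p sigma_gt0) H_ge0 H_le
  (lam_star_min _ (mulr_ge0 C_ge0 (powR_ge0 _ _))).
suff -> : C theta * (2 `^ (p - 1) + (1 + 2 `^ (p - 1) * rho `^ p) / sigma `^ p)
  = lam0 + K / sigma `^ p by [].
by rewrite /lam0 /K mulrDr mulrA.
Qed.
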